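(* Let $I,S\ge 0$ be integers and consider the pairing process described in the context. If $j>\lfloor I/2\rfloor$ or $j<L(I,S)$, then no possible wiring has exactly $j$ bb-pairings. If $L(I,S)\le j\le\lfloor I/2\rfloor$, then every possible wiring with exactly $j$ bb-pairings occurs with probability $$\prod_{k=0}^{I-j-1-z}\frac{1}{I+S-1-2k},$$ where $z=1$ if $(I,S,j)$ is in the dagger case and $z=0$ otherwise.
   Context: Pairing process: there are $I$ infected devices $b_1,\dots,b_I$ and $S$ clean devices $w_1,\dots,w_S$. For $t=1,\dots,I$ in this order: if $b_t$ is not yet paired and at least one device other than $b_t$ is not yet paired, then $b_t$ chooses one of the currently unpaired devices other than itself uniformly at random, independently of previous choices, and becomes paired with it; otherwise $b_t$ does nothing. Each device belongs to at most one pair. The wiring is the final set of pairs; a bb-pairing is a pair consisting of two infected devices; a wiring is possible if it occurs with positive probability. $L(I,S)=0$ if $I\le S$; $L(I,S)=\frac{I-S}{2}$ if $I>S$ and $I-S$ is even; $L(I,S)=\frac{I-S-1}{2}$ if $I>S$ and $I-S$ is odd. $(I,S,j)$ is in the dagger case if $I>S$, $I+S$ is odd and $j=\frac{I-S-1}{2}$. *)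

From mathcomp Require Import all_boot all_order all_algebra.
Unset Printing Implicit Defensive.
Import Order.TTheory GRing.Theory Num.Theory.
Local Open Scope ring_scope.

(* Devices are 'I_(I+S): index d < I is the infected device b_(d+1),
   index I + i is the clean device w_(i+1). *)
Definition device (I S : nat) := 'I_(I + S).
Definition wiring (I S : nat) := {set {set 'I_(I + S)}}.

(* wp I S k t P Ws W : probability that, running the remaining k steps
   starting with the step of infected device with index t (0-based), from the
   state where P is the set of already paired devices and Ws the current set
   of pairs, the final wiring is exactly W. *)
Fixpoint wp (I S : nat) (k t : nat) (P : {set 'I_(I + S)})
    (Ws : {set {set 'I_(I + S)}}) (W : {set {set 'I_(I + S)}}) : rat :=
  match k with
  | 0 => (Ws == W)%:R
  | k'.+1 =>
    match [pick b : 'I_(I + S) | val b == t] with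
    | Some b =>
      let C := [set d : 'I_(I + S) | (d \notin P) && (d != b)] in
      if (b \notin P) && (0 < #|C|)%N then
        \sum_(d in C) (#|C|%:R)^-1 * wp I S k' t.+1 (d |: (b |: P)) ([set b; d] |: Ws) W
      else wp I S k' t.+1 P Ws W
    | None => wp I S k' t.+1 P Ws W
    end
  end.

Definition wiring_prob (I S : nat) (W : {set {set 'I_(I + S)}}) : rat :=
  wp I S I 0 set0 set0 W.

Definition possible (I S : nat) (W : {set {set 'I_(I + S)}}) : Prop :=
  0 < wiring_prob I S W.

Definition bb (I S : nat) (W : {set {set 'I_(I + S)}}) : nat :=
  #|[set p in W | p \subset [set d : 'I_(I + S) | (val d < I)%N]]|.

Definition L (I S : nat) : nat :=
  if (I <= S)%N then 0%N
  else if ~~ odd (I - S) then ((I - S) %/ 2)%N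
  else ((I - S - 1) %/ 2)%N.

Definition dagger (I S j : nat) : bool :=
  [&& (S < I)%N, odd (I + S) & j == ((I - S - 1) %/ 2)%N].

Definition wprod (I S j : nat) : rat :=
  let z := (if dagger I S j then 1 else 0)%N in
  \prod_(k < I - j - z) ((I + S)%:R - 1 - 2 * k%:R)^-1.

From mathcomp Require Import all_boot all_order all_algebra.
From mathcomp Require Import zify ring.
Import Order.TTheory GRing.Theory Num.Theory.
Set Implicit Arguments.
Unset Strict Implicit.
Unset Printing Implicit Defensive.

Local Open Scope ring_scope.

(* When infected device b_t pairs, the devices already paired are exactly those
   of the current pairs, so b_t chooses among I + S - 1 - 2k partners, k being
   the number of pairs formed so far; each possible wiring W is produced by a
   single run, hence with probability prod_(k < #|W|) 1/(I + S - 1 - 2k).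
   Every pair contains the infected device that formed it, and at the end at
   most one infected device is unpaired, and only if it is the last unpaired
   device of all.  So I = #|W| + bb W + u with u <= 1, u = 1 forcing
   I + S = 2 #|W| + 1; this pins #|W| = I - j - z and the range of j. *)

Lemma cardsU1I (T : finType) (x : T) (A B : {set T}) :
  x \notin A -> #|(x |: A) :&: B| = ((x \in B) + #|A :&: B|)%N.
Proof.
move=> xA; case xB: (x \in B).
- have -> : (x |: A) :&: B = x |: (A :&: B).
    by apply/setP => y; rewrite !inE; case: eqVneq => [->|] //=; rewrite xB.
  by rewrite cardsU1 inE (negbTE xA).
- suff -> : (x |: A) :&: B = A :&: B by [].
  by apply/setP => y; rewrite !inE; case: eqVneq => [->|] //=; rewrite xB (negbTE xA).
Qed.

Lemma matching_pair_unique (T : finType) (W : {set {set T}}) (b d d' : T) :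
  (forall q r x, q \in W -> r \in W -> x \in q -> x \in r -> q = r) ->
  [set b; d] \in W -> [set b; d'] \in W -> d != b -> d = d'.
Proof.
move=> disjW bdW bd'W db.
have Ebd : [set b; d] = [set b; d'] by apply: disjW bdW bd'W (set21 b d) (set21 b d').
by have := set22 b d; rewrite Ebd !inE (negbTE db) => /eqP.
Qed.

Lemma sumr_neq0_exists (T : finType) (R : nmodType) (A : {pred T}) (F : T -> R) :
  \sum_(x in A) F x != 0 -> exists2 x, x \in A & F x != 0.
Proof.
case: (pickP (fun x => (x \in A) && (F x != 0))) => [x /andP[] | noF]; first by exists x.
rewrite big1 ?eqxx // => x xA.
by have := noF x; rewrite xA => /negbFE/eqP.
Qed.

(* m pairs and j bb-pairings; the summand 1 is an infected device left
   unpaired, which can only be the last unpaired device of all. *)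
Definition pairing_counts (I S m j : nat) : Prop :=
  [/\ j <= m, 2 * m <= I + S & I = m + j \/ I = m + j + 1 /\ I + S = 2 * m + 1]%N.

Lemma pairing_counts_bb_range I S m j :
  pairing_counts I S m j -> (L I S <= j <= I %/ 2)%N.
Proof.
case=> jm mIS counts; have := modn2 (I - S); rewrite /L.
by case: (I <= S)%N (odd (I - S)) => [] [] /= ?; lia.
Qed.

Lemma pairing_counts_card I S m j :
  pairing_counts I S m j -> (I - j - (if dagger I S j then 1 else 0) = m)%N.
Proof.
case=> jm mIS counts; have := modn2 (I + S); rewrite /dagger.
case: (ltnP S I) (odd (I + S)) (eqVneq j ((I - S - 1) %/ 2)%N) => ? [] [] /= ? ?; lia.
Qed.

Section PairingProcess.

Variables I S : nat.
Local Notation device := 'I_(I + S).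

Definition infected : {set device} := [set d | (val d < I)%N].

Lemma card_infected : #|infected| = I.
Proof.
have widen_inj : injective (widen_ord (leq_addr S I)).
  by move=> x y /(congr1 val) /= /val_inj.
have -> : infected = widen_ord (leq_addr S I) @: [set: 'I_I].
  apply/setP => d; rewrite inE; apply/idP/imsetP => [dI | [i _ ->] /=].
  - by exists (Ordinal dI); [rewrite inE | apply: val_inj].
  - exact: ltn_ord.
by rewrite card_imset // cardsT card_ord.
Qed.

Definition unpaired_before (t : nat) (P : {set device}) : {set device} :=
  [set d | (val d < t)%N && (d \notin P)].

(* The last clause says b_0, ..., b_(t-1) are all paired, except possibly
   one of them when it is the only unpaired device overall. *)
Definition pairing_inv (t : nat) (P : {set device}) (Ws : {set {set device}}) :=
  [/\ forall q, q \in Ws -> q \subset P,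
      forall q r x, q \in Ws -> r \in Ws -> x \in q -> x \in r -> q = r,
      #|P| = (2 * #|Ws|)%N,
      #|P :&: infected| = (#|Ws| + bb I S Ws)%N
    & unpaired_before t P = set0 \/
      (#|unpaired_before t P| = 1 /\ (#|P|).+1 = I + S)%N].

Lemma pairing_inv0 : pairing_inv 0 set0 set0.
Proof.
split; rewrite ?cards0 //; first by move=> q; rewrite inE.
- by move=> q r x; rewrite inE.
- by rewrite set0I cards0 /bb (eq_card0 (fun p => _)) // => p; rewrite !inE.
- by left; apply/setP => d; rewrite !inE.
Qed.

Local Notation partners P b := [set d : device | (d \notin P) && (d != b)].

Lemma unpaired_before_eq0 t P Ws (b : device) :
  pairing_inv t P Ws -> val b = t -> b \notin P -> unpaired_before t P = set0.
Proof.
case=> _ _ _ _ [//|[/eqP/cards1P [x Ux] fullP]] bt bP.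
have /[!inE] /andP [xt xP] : x \in unpaired_before t P by rewrite Ux set11.
have xb : x != b by apply: contraTneq xt => ->; rewrite bt ltnn.
have xbP : [set x; b] \subset ~: P by apply/subsetP => y /[!inE] /orP [] /eqP ->.
have := subset_leq_card xbP; rewrite cards2 xb.
have := cardsC P; rewrite card_ord; lia.
Qed.

Lemma unpaired_beforeS t P (b : device) : val b = t ->
  unpaired_before t.+1 P = unpaired_before t P :|: [set b] :\: P.
Proof.
move=> bt; apply/setP => e; rewrite !inE ltnS leq_eqVlt -bt.
by rewrite val_eqE; case: (e == b); case: (e \in P); rewrite /= ?andbT ?andbF ?orbT ?orbF.
Qed.

Lemma unpaired_before_subset t (P P' : {set device}) :
  P \subset P' -> unpaired_before t P' \subset unpaired_before t P.
Proof.
move=> PP'; apply/subsetP => e /[!inE] /andP [-> eP'] /=.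
by apply: contra eP' => /(subsetP PP').
Qed.

Lemma card_compl_partners (P : {set device}) (b : device) :
  b \notin P -> #|~: P| = (#|partners P b|).+1.
Proof.
move=> bP; rewrite [LHS](cardsD1 b) inE bP add1n; congr _.+1.
by apply: eq_card => e; rewrite !inE andbC.
Qed.

Lemma pairing_inv_skip t P Ws (b : device) :
  pairing_inv t P Ws -> val b = t -> (b \in P \/ #|partners P b| = 0%N) ->
  pairing_inv t.+1 P Ws.
Proof.
move=> inv bt skip; case: (inv) => subW disjW cardP cardPI Ub; split=> //.
rewrite (unpaired_beforeS P bt); case: (boolP (b \in P)) => bP.
  by rewrite (_ : [set b] :\: P = set0) ?setU0 //; apply/eqP; rewrite setD_eq0 sub1set.
case: skip => [bP'|no_partner]; first by rewrite bP' in bP.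
rewrite (unpaired_before_eq0 inv bt bP) set0U (setDidPl _) ?disjoints1 //.
right; split; first exact: cards1.
by have := cardsC P; rewrite card_ord (card_compl_partners bP) no_partner; lia.
Qed.

Lemma bb_setU1 q (Ws : {set {set device}}) :
  q \notin Ws -> bb I S (q |: Ws) = ((q \subset infected) + bb I S Ws)%N.
Proof. by move=> qWs; rewrite /bb !setIdE cardsU1I // inE. Qed.

Lemma new_pair_notin t P Ws (b d : device) :
  pairing_inv t P Ws -> b \notin P -> [set b; d] \notin Ws.
Proof.
case=> subW _ _ _ _ bP; apply: contra bP => /subW /subsetP; apply.
exact: set21.
Qed.

Lemma pairing_inv_pair t P Ws (b d : device) :
  pairing_inv t P Ws -> val b = t -> (t < I)%N -> b \notin P -> d \in partners P b ->
  pairing_inv t.+1 (d |: (b |: P)) ([set b; d] |: Ws).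
Proof.
move=> inv bt tI bP /[!inE] /andP [dP db].
have U0 := unpaired_before_eq0 inv bt bP.
have bdW := new_pair_notin d inv bP.
case: inv => subW disjW cardP cardPI _.
have fresh_pair r x : r \in Ws -> x \in [set b; d] -> x \notin r.
  move=> rW /set2P [] -> ; apply/negP => /(subsetP (subW r rW)).
    by rewrite (negbTE bP).
  by rewrite (negbTE dP).
have dbP : d \notin b |: P by rewrite !inE negb_or db dP.
have PP' : P \subset d |: (b |: P) by apply/subsetP => y yP; rewrite !inE yP !orbT.
split.
- move=> q /setU1P [-> | qW]; last exact: subset_trans (subW q qW) PP'.
  by apply/subsetP => y /set2P [] ->; rewrite !inE eqxx ?orbT.
- move=> q r x /setU1P [-> | qW] /setU1P [-> | rW] xq xr //.
  + by have := fresh_pair r x rW xq; rewrite xr.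
  + by have := fresh_pair q x qW xr; rewrite xq.
  + exact: disjW qW rW xq xr.
- by rewrite cardsU1 dbP cardsU1 bP cardP cardsU1 bdW; lia.
- have bI : b \in infected by rewrite inE bt.
  rewrite cardsU1I // cardsU1I // cardPI bb_setU1 // cardsU1 bdW subUset !sub1set bI /=.
  by case: (d \in infected) => /=; lia.
- left; apply/eqP; rewrite (unpaired_beforeS _ bt) setU_eq0 setD_eq0 sub1set.
  by rewrite !inE eqxx orbT andbT -subset0 -U0 unpaired_before_subset.
Qed.

Definition step_prob (k : nat) : rat := ((I + S)%:R - 1 - 2 * k%:R)^-1.

Lemma partners_prob t P Ws (b : device) : pairing_inv t P Ws -> b \notin P ->
  (#|partners P b|%:R)^-1 = step_prob #|Ws|.
Proof.
case=> _ _ cardP _ _ bP; rewrite /step_prob; congr _^-1.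
have -> : (I + S)%:R = (2 * #|Ws| + #|partners P b| + 1)%:R :> rat.
  by rewrite -cardP -addnA addn1 -(card_compl_partners bP) cardsC card_ord.
by rewrite !natrD -mulr_natl; ring.
Qed.

Lemma wp_spec k t P Ws W : (t + k = I)%N -> pairing_inv t P Ws ->
  wp I S k t P Ws W != 0 ->
  [/\ exists Pf, pairing_inv I Pf W, Ws \subset W &
      wp I S k t P Ws W = \prod_(#|Ws| <= i < #|W|) step_prob i].
Proof.
elim: k t P Ws => [|k IH] t P Ws.
  rewrite addn0 => tI inv /=; subst t.
  case: (eqVneq Ws W) => [<- _ | _]; last by rewrite eqxx.
  by split; [exists P | exact: subxx | rewrite big_geq].
move=> tkI inv /=; have tI : (t < I)%N by lia.
have tkI' : (t.+1 + k)%N = I by rewrite addSnnS.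
case: pickP => [b /eqP bt | no_b]; last first.
  by have := no_b (Ordinal (leq_trans tI (leq_addr S I))); rewrite eqxx.
case: ifP => [/andP [bP _] | no_pair]; last first.
  apply: IH tkI' (pairing_inv_skip inv bt _).
  case: (boolP (b \in P)) => bP; [by left | right].
  by move: no_pair; rewrite bP /= => /negbT; rewrite -leqNgt leqn0 => /eqP.
have inv_d d : d \in partners P b ->
    pairing_inv t.+1 (d |: (b |: P)) ([set b; d] |: Ws).
  exact: pairing_inv_pair inv bt tI bP.
move=> /sumr_neq0_exists [d0 d0C]; rewrite mulf_eq0 negb_or => /andP [_ nz_d0].
have [[Pf invW] subW valW] := IH _ _ _ tkI' (inv_d d0 d0C) nz_d0.
have others d : d \in partners P b -> d != d0 ->
    wp I S k t.+1 (d |: (b |: P)) ([set b; d] |: Ws) W = 0.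
  move=> dC dd0; apply/eqP; apply: contraNT dd0 => nz_d; apply/eqP.
  have [_ subW' _] := IH _ _ _ tkI' (inv_d d dC) nz_d.
  case: invW => _ disjW _ _ _; apply: (matching_pair_unique (b := b) disjW).
  - by apply: (subsetP subW'); rewrite setU11.
  - by apply: (subsetP subW); rewrite setU11.
  - by move: dC; rewrite inE => /andP [].
rewrite (bigD1 d0) //= big1 ?addr0 => [|d /andP [dC dd0]]; last first.
  by rewrite others ?mulr0.
have bdWs := new_pair_notin d0 inv bP.
have ltWs : (#|Ws| < #|W|)%N.
  by have := subset_leq_card subW; rewrite cardsU1 bdWs.
split; first by exists Pf.
  by apply: subset_trans subW; apply: subsetUr.
by rewrite (partners_prob inv bP) valW cardsU1 bdWs (big_ltn ltWs).
Qed.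

Lemma pairing_inv_final_counts P W :
  pairing_inv I P W -> pairing_counts I S #|W| (bb I S W).
Proof.
case=> _ _ cardP cardPI Ufinal; split.
- by rewrite /bb setIdE; apply/subset_leq_card/subsetIl.
- by rewrite -cardP -[X in (_ <= X)%N](card_ord (I + S)) max_card.
have Uinfected : unpaired_before I P = infected :\: P.
  by apply/setP => d; rewrite !inE andbC.
have := cardsID P infected; rewrite setIC cardPI card_infected.
by rewrite Uinfected in Ufinal; case: Ufinal => [-> | [-> fullP]]; rewrite ?cards0; lia.
Qed.

Lemma possible_final W : possible I S W ->
  (exists P, pairing_inv I P W) /\ wiring_prob I S W = \prod_(i < #|W|) step_prob i.
Proof.
move=> /lt0r_neq0 W_nz.
have [final _ prob] := wp_spec (add0n I) pairing_inv0 W_nz.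
by rewrite /wiring_prob prob cards0 big_mkord.
Qed.

End PairingProcess.

Theorem lemma2 (I S j : nat) :
  (((I %/ 2 < j)%N \/ (j < L I S)%N) ->
     forall W : {set {set 'I_(I + S)}}, possible I S W -> bb I S W <> j)
  /\
  ((L I S <= j)%N -> (j <= I %/ 2)%N ->
     forall W : {set {set 'I_(I + S)}}, possible I S W -> bb I S W = j ->
       wiring_prob I S W = wprod I S j).
Proof.
have counts W : possible I S W -> pairing_counts I S #|W| (bb I S W).
  by case/possible_final => [[P /pairing_inv_final_counts]].
split=> [j_out W /counts /pairing_counts_bb_range | _ _ W possW bbW].
  by move=> /andP [Lj jI] bbW; case: j_out; rewrite -bbW; lia.
have [_ ->] := possible_final possW.
by rewrite /wprod -bbW (pairing_counts_card (counts W possW)).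
Qed.
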